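(* Let $(X,d,G)$ be a $G$-system, $\{F_n\}$ a Følner sequence of $G$, and $Z$ a nonempty subset of $X$. Then: (1) if $h_{top}(G,Z,\{F_n\})=\infty$ and $\overline{\mathrm{mdim}}_M(G,Z,\{F_n\},d)<\infty$, then $\overline{D}_M(G,Z,\{F_n\},d)\le1\le D(G,Z,\{F_n\})$; (2) if $0<\overline{\mathrm{mdim}}_M(G,Z,\{F_n\},d)<\infty$, then $\overline{D}_M(G,Z,\{F_n\},d)=1=D(G,Z,\{F_n\})$.
   Context: $G$ is a countably infinite discrete amenable group; $(X,d,G)$ a compact metric space with continuous $G$-action by homeomorphisms; $\{F_n\}$ nonempty finite subsets of $G$ with $|gF_n\triangle F_n|/|F_n|\to0$ for all $g$. $d_F(x,y)=\max_{g\in F}d(gx,gy)$; $s(Z,d_F,\epsilon)$ maximal cardinality of a subset of $Z$ with pairwise $d_F$-distances $>\epsilon$; $h_{top}(G,Z,d,\{F_n\},\epsilon)=\limsup_n\frac1{|F_n|}\log s(Z,d_{F_n},\epsilon)$ and $h_{top}(G,Z,\{F_n\})=\lim_{\epsilon\to0}h_{top}(G,Z,d,\{F_n\},\epsilon)$. For $s>0$: $h_{top}(G,Z,s,\{F_n\})=\lim_{\epsilon\to0}\limsup_n\frac{\log s(Z,d_{F_n},\epsilon)}{|F_n|^s}$ and the entropy dimension is $D(G,Z,\{F_n\})=\inf\{s>0:h_{top}(G,Z,s,\{F_n\})=0\}$; $\overline{\mathrm{mdim}}_M(G,Z,\{F_n\},s,d)=\limsup_{\epsilon\to0}h_{top}(G,Z,d,\{F_n\},\epsilon)/(\log\frac1\epsilon)^s$,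 $\overline{\mathrm{mdim}}_M(G,Z,\{F_n\},d)$ is the case $s=1$, and $\overline{D}_M(G,Z,\{F_n\},d)=\inf\{s>0:\overline{\mathrm{mdim}}_M(G,Z,\{F_n\},s,d)=0\}$. *)

From HB Require Import structures.
From mathcomp Require Import all_boot all_order all_algebra finmap.
From mathcomp Require Import all_classical all_reals all_analysis.

Set Implicit Arguments.
Unset Strict Implicit.
Unset Printing Implicit Defensive.

Import Order.TTheory GRing.Theory Num.Theory.
Import numFieldNormedType.Exports.

Local Open Scope classical_set_scope.
Local Open Scope ring_scope.

Section GSystem.
Variables (R : realType) (G : groupType) (X : Type).

Definition is_metric (d : X -> X -> R) : Prop :=
  [/\ forall x y, d x y = 0 <-> x = y,
      forall x y, d x y = d y x &
      forall x y z, d x z <= d x y + d y z].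

(* (X,d) is compact (sequential compactness, equivalent for metric spaces) *)
Definition metric_compact (d : X -> X -> R) : Prop :=
  forall u : nat -> X, exists phi : nat -> nat, exists x : X,
    (forall n, (phi n < phi n.+1)%N) /\
    (fun n => d (u (phi n)) x) @ \oo --> (0 : R).

(* act is a left action of G on X by continuous maps (hence homeomorphisms) *)
Definition is_continuous_action (d : X -> X -> R) (act : G -> X -> X) : Prop :=
  [/\ forall x, act 1%g x = x,
      forall g h x, act (g * h)%g x = act g (act h x) &
      forall g x (e : R), 0 < e -> exists2 delta : R, 0 < delta &
        forall y, d x y < delta -> d (act g x) (act g y) < e].

Definition countably_infinite : Prop :=
  exists e : nat -> G, bijective e.

Definition ltrans (g : G) (F : {fset G}) : {fset G} := [fset (g * h)%g | h in F]%fset.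
Definition fsymdiff (A B : {fset G}) : {fset G} := ((A `\` B) `|` (B `\` A))%fset.

Definition Folner (F : nat -> {fset G}) : Prop :=
  (forall n, F n != fset0) /\
  forall g : G,
    (fun n => (#|` fsymdiff (ltrans g (F n)) (F n)|%:R / #|` F n|%:R : R))
      @ \oo --> (0 : R).

Variables (d : X -> X -> R) (act : G -> X -> X).

Definition dF (F : {fset G}) (x y : X) : R :=
  \big[Num.max/0]_(g <- F) d (act g x) (act g y).

Definition sep_num (Z : set X) (F : {fset G}) (eps : R) : \bar R :=
  ereal_sup [set (n%:R)%:E | n in [set n : nat | exists f : nat -> X,
     (forall i, (i < n)%N -> Z (f i)) /\
     (forall i j, (i < n)%N -> (j < n)%N -> i <> j -> eps < dF F (f i) (f j))]].

Definition elog (x : \bar R) : \bar R :=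
  match x with
  | r%:E => (ln r)%:E
  | +oo%E => +oo%E
  | -oo%E => -oo%E
  end.

Local Open Scope ereal_scope.

Definition htop_eps (Z : set X) (F : nat -> {fset G}) (eps : R) : \bar R :=
  limn_esup (fun n => elog (sep_num Z (F n) eps) * ((#|` F n|%:R)^-1)%:E).

Definition htop (Z : set X) (F : nat -> {fset G}) : \bar R :=
  lim (htop_eps Z F @ 0^'+).

Definition htop_s (Z : set X) (s : R) (F : nat -> {fset G}) : \bar R :=
  lim ((fun eps => limn_esup (fun n =>
          elog (sep_num Z (F n) eps) * ((#|` F n|%:R `^ s)^-1)%:E)) @ 0^'+).

Definition entropy_dim (Z : set X) (F : nat -> {fset G}) : \bar R :=
  ereal_inf [set s%:E | s in [set s : R | (0 < s)%R /\ htop_s Z s F = 0]].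

Definition mdimM_s (Z : set X) (F : nat -> {fset G}) (s : R) : \bar R :=
  limf_esup (fun eps : R => htop_eps Z F eps * (((ln eps^-1) `^ s)^-1)%:E) 0^'+.

Definition mdimM (Z : set X) (F : nat -> {fset G}) : \bar R := mdimM_s Z F 1.

Definition DM (Z : set X) (F : nat -> {fset G}) : \bar R :=
  ereal_inf [set s%:E | s in [set s : R | (0 < s)%R /\ mdimM_s Z F s = 0]].

End GSystem.

(* Write h(eps) for h_top(G,Z,d,{F_n},eps); it is nonnegative (Z is nonempty)
   and nonincreasing in eps. Both dimensions are critical exponents of limsups
   of ratios u/w^s with w -> +oo: u = log s(Z,d_{F_n},eps) and w = |F_n| for
   D (|F_n| -> +oo because G is infinite), u = h(eps) and w = log(1/eps) for
   \overline{D}_M. Such a limsup vanishes at every exponent above one where it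
   is finite, and does not decrease when the exponent decreases. Hence finite
   mdim_M puts both critical exponents at most 1, while mdim_M > 0 or
   h_top = +oo forces h(eps) -> +oo and thus infinite s-entropies for s < 1. *)

From mathcomp Require Import all_boot all_order all_algebra finmap.
From mathcomp Require Import all_classical all_reals all_analysis.
From mathcomp Require Import zify.
Import Order.TTheory GRing.Theory Num.Theory.
Import numFieldNormedType.Exports.
Local Open Scope classical_set_scope.
Local Open Scope ereal_scope.

Section Folner.
Variables (R : realType) (G : groupType) (F : nat -> {fset G}).
Hypothesis FolnerF : Folner R F.

Lemma card_ltrans (g : G) (A : {fset G}) : #|` ltrans g A| = #|` A|.
Proof. by rewrite card_in_imfset //= => h1 h2 _ _; apply: mulgI. Qed.

Lemma Folner_meets_translate (g : G) :
  \forall n \near \oo, exists2 h, h \in F n & (g * h)%g \in F n.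
Proof.
have [F_neq0 F_invariant] := FolnerF.
near=> n.
have : (#|` fsymdiff (ltrans g (F n)) (F n)|%:R / #|` F n|%:R < 1 :> R)%R.
  by near: n; apply: (cvgr_lt 0%R (F_invariant g)).
rewrite ltr_pdivrMr ?ltr0n ?cardfs_gt0 ?F_neq0 // mul1r ltr_nat.
apply: contraPP => /forall2NP no_meet; apply/negP.
rewrite -leqNgt -{1}(card_ltrans g).
apply: fsubset_leq_card; apply/fsubsetP => _ /imfsetP[h /= hF ->].
rewrite !inE /= in_imfset //=.
by case: (no_meet h) => // /negP ->.
Unshelve. all: by end_near.
Qed.

Lemma Folner_card_cvgy (e : nat -> G) : injective e ->
  ((#|` F n|%:R : R) @[n --> \oo] --> +oo)%R.
Proof.
move=> e_inj; apply/cvgryPge => A.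
have [K leAK] : exists K : nat, (A <= K%:R)%R.
  by exists (Num.trunc A).+1; apply/ltW/truncnS_gt.
near=> n.
have meets : forall i : 'I_(K * K), exists2 h, h \in F n & (e i * h)%g \in F n.
  by near: n; apply: filter_forall => i; apply: Folner_meets_translate.
apply: le_trans leAK _; rewrite ler_nat.
suff : (K * K <= #|` F n| * #|` F n|)%N by nia.
(* each [e i] is a quotient [a * b^-1] of two elements of [F n] *)
rewrite -(size_iota 0 (K * K)) -(size_map e).
rewrite -(size_allpairs (fun a b : G => (a * b^-1)%g)).
apply: uniq_leq_size; first by rewrite map_inj_uniq ?iota_uniq.
move=> g /mapP[i]; rewrite mem_iota => /andP[_ ltiKK] ->.
have [h hF ehF] := meets (Ordinal ltiKK).
by rewrite -(mulgK h (e i)); apply: allpairs_f.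
Unshelve. all: by end_near.
Qed.

End Folner.

Section limf_esup_near.
Context {R : realType} {T : choiceType} {X : filteredType T}.
Implicit Types (f g : X -> \bar R) (F : set_system X) (a : \bar R).

Lemma limf_esup_le f F a : (\forall x \near F, f x <= a) -> limf_esup f F <= a.
Proof.
move=> f_le_a; apply: (@le_trans _ _ (ereal_sup (f @` [set x | f x <= a]))).
  by apply: ereal_inf_lbound; exists [set x | f x <= a].
by apply: ge_ereal_sup => _ [x fxa <-].
Qed.

Lemma limf_esup_lt f F a : Filter F ->
  limf_esup f F < a -> \forall x \near F, f x < a.
Proof.
move=> FF /ereal_inf_lt[_ [V FV <-]] supVa; apply: filterS FV => x Vx.
by apply: le_lt_trans supVa; apply: ereal_sup_ubound; exists x.
Qed.

Lemma limf_esup_gt f F a (P : set X) :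
  a < limf_esup f F -> (\forall x \near F, P x) -> exists x, P x /\ a < f x.
Proof.
move=> a_lt FP; have : a < ereal_sup (f @` P).
  by apply: lt_le_trans a_lt _; apply: ereal_inf_lbound; exists P.
by move=> /ereal_sup_gt[_ [x Px <-]]; exists x.
Qed.

Lemma le_limf_esup f g F : Filter F ->
  (\forall x \near F, f x <= g x) -> limf_esup f F <= limf_esup g F.
Proof.
move=> FF f_le_g; apply: le_ereal_inf_tmp => _ [V FV <-]; apply: limf_esup_le.
apply: filterS2 f_le_g FV => x fxgx Vx; apply: le_trans fxgx _.
by apply: ereal_sup_ubound; exists x.
Qed.

End limf_esup_near.

Lemma ln_inv_cvgy {R : realType} : (ln x^-1 @[x --> (0 : R)^'+] --> +oo)%R.
Proof.
have : ((- ln x)%R @[x --> (0 : R)^'+] --> +oo)%R by apply/cvgNry; exact: lnNy.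
apply: cvg_trans; apply: near_eq_cvg; near=> x; rewrite lnV // posrE.
by near: x; apply: nbhs_right_gt.
Unshelve. all: by end_near.
Qed.

Lemma powR_cvgy {R : realType} {T : Type} {F : set_system T} {FF : Filter F}
    (w : T -> R) (p : R) :
  (0 < p)%R -> (w x @[x --> F] --> +oo)%R -> (w x `^ p @[x --> F] --> +oo)%R.
Proof.
move=> p_gt0 /cvgryPge w_cvgy; apply/cvgryPge => A.
pose B := Num.max A 1%R.
have B_gt0 : (0 < B)%R by rewrite lt_max ltr01 orbT.
have B_root : ((B `^ p^-1) `^ p = B)%R.
  by rewrite -powRrM mulVf ?gt_eqF // powRr1 // ltW.
near=> x; apply: (@le_trans _ _ B); first by rewrite le_max lexx.
have w_ge : (B `^ p^-1 <= w x)%R by near: x; apply: w_cvgy.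
rewrite -B_root; apply: ge0_ler_powR (w_ge).
- exact: ltW.
- by rewrite nnegrE powR_ge0.
- by rewrite nnegrE (le_trans (powR_ge0 _ _) w_ge).
Unshelve. all: by end_near.
Qed.

Lemma nonincreasing_at_right0_cvgy {R : realType} (f : R -> \bar R) :
  (forall x y, (0 < x)%R -> (x <= y)%R -> f y <= f x) ->
  limf_esup f (0 : R)^'+ = +oo -> f x @[x --> (0 : R)^'+] --> +oo.
Proof.
move=> f_noninc f_supy; apply/cvgeyPge => A.
have : A%:E < limf_esup f (0 : R)^'+ by rewrite f_supy ltry.
move=> /limf_esup_gt/(_ (nbhs_right_gt 0%R))[y [y_gt0 A_lt_fy]].
near=> x; apply/ltW/(lt_le_trans A_lt_fy)/f_noninc.
- by near: x; apply: nbhs_right_gt.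
- by near: x; apply: nbhs_right_le.
Unshelve. all: by end_near.
Qed.

Definition limsup_ratio {R : realType} {T : choiceType} {X : filteredType T}
    (F : set_system X) (u : X -> \bar R) (w : X -> R) (s : R) : \bar R :=
  limf_esup (fun x => u x * ((w x `^ s)^-1)%:E) F.

Section limsup_ratio.
Context {R : realType} {T : choiceType} {X : filteredType T}.
Context {F : set_system X} {FF : ProperFilter F} {u : X -> \bar R} {w : X -> R}.
Hypothesis u_ge0 : forall x, 0 <= u x.
Local Notation limsup_ratio := (limsup_ratio F u w).

Lemma limsup_ratio_ge0 s : 0 <= limsup_ratio s.
Proof.
apply: limf_esup_ge0; first exact: filter_not_empty.
by move=> x; apply: mule_ge0; rewrite // lee_fin invr_ge0 powR_ge0.
Qed.

Lemma limsup_ratio0 : limsup_ratio 0 = limf_esup u F.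
Proof.
by rewrite /limsup_ratio; under eq_fun do rewrite powRr0 invr1 mule1.
Qed.

Lemma le_limsup_ratio r s : (s <= r)%R -> (\forall x \near F, 1 <= w x)%R ->
  limsup_ratio r <= limsup_ratio s.
Proof.
move=> s_le_r w_ge1; apply: le_limf_esup; apply: filterS w_ge1 => x w_ge1.
have w_gt0 : (0 < w x)%R by apply: lt_le_trans w_ge1.
apply: lee_wpmul2l => //; rewrite lee_fin lef_pV2 ?posrE ?powR_gt0 //.
exact: ler_powR.
Qed.

Lemma limsup_ratio_eq0 r s : (r < s)%R -> (w x @[x --> F] --> +oo)%R ->
  limsup_ratio r < +oo -> limsup_ratio s = 0.
Proof.
move=> r_lt_s w_cvgy ratio_fin.
have [c c_gt0 ratio_lt_c] : exists2 c : R, (0 < c)%R & limsup_ratio r < c%:E.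
  move: (limsup_ratio_ge0 r) ratio_fin; case: (limsup_ratio r) => // l l_ge0 _.
  by exists (l + 1)%R; rewrite ?lte_fin ?ltrDl // ltr_wpDl.
apply/le_anti; rewrite limsup_ratio_ge0 andbT; apply/lee_addgt0Pr => δ δ_gt0.
rewrite add0e; apply: limf_esup_le.
have w_gt0 : \forall x \near F, (0 < w x)%R by move/cvgryPgt : w_cvgy; apply.
have sr_gt0 : (0 < s - r)%R by rewrite subr_gt0.
have w_large : \forall x \near F, (c / δ <= w x `^ (s - r))%R.
  by apply: (cvgryPge _).1; apply: powR_cvgy.
(* [u / w^s = (u / w^r) / w^(s - r)], a product of factors eventually below
   [c] and [δ / c] *)
near=> x.
have wx_gt0 : (0 < w x)%R by near: x.
have ratio_x : u x * ((w x `^ r)^-1)%:E <= c%:E.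
  by apply: ltW; near: x; apply: limf_esup_lt.
have w_x : (c / δ <= w x `^ (s - r))%R by near: x.
have -> : (w x `^ s = w x `^ r * w x `^ (s - r))%R.
  by rewrite -powRD ?(gt_eqF wx_gt0) ?implybT // addrC subrK.
have -> : δ%:E = c%:E * (δ / c)%:E by rewrite -EFinM mulrC divfK ?lt0r_neq0.
rewrite invfM EFinM muleA.
apply: lee_pmul => //.
- by apply: mule_ge0; rewrite // lee_fin invr_ge0 powR_ge0.
- by rewrite lee_fin invr_ge0 powR_ge0.
- by rewrite lee_fin -invf_div lef_pV2 ?posrE ?powR_gt0 ?divr_gt0.
Unshelve. all: by end_near.
Qed.

End limsup_ratio.

Lemma ereal_inf_pos_le1 {R : realType} (S : R -> Prop) :
  (forall s, (1 < s)%R -> S s) ->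
  ereal_inf [set s%:E | s in [set s : R | (0 < s)%R /\ S s]] <= 1.
Proof.
move=> S_gt1; apply/lee_addgt0Pr => δ δ_gt0; apply: ereal_inf_lbound.
exists (1 + δ)%R => //; split; first by rewrite addr_gt0.
by apply: S_gt1; rewrite ltrDl.
Qed.

Lemma ereal_inf_pos_ge1 {R : realType} (S : R -> Prop) :
  (forall s, (0 < s)%R -> (s < 1)%R -> ~ S s) ->
  1 <= ereal_inf [set s%:E | s in [set s : R | (0 < s)%R /\ S s]].
Proof.
move=> S_lt1; apply: le_ereal_inf_tmp => _ [s [s_gt0 Ss] <-].
by rewrite lee_fin leNgt; apply/negP => s_lt1; apply: S_lt1 Ss.
Qed.

Section elog.
Context {R : realType}.
Implicit Types x y : \bar R.

Lemma elog_ge0 x : 1 <= x -> 0 <= elog x.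
Proof. by case: x => [r||] //=; rewrite !lee_fin => r_ge1; rewrite ln_ge0. Qed.

Lemma le_elog x y : 1 <= x -> x <= y -> elog x <= elog y.
Proof.
case: x => [r||] //; case: y => [r'||] //=; rewrite ?leey //.
rewrite !lee_fin => r_ge1 r_le.
by rewrite ler_ln ?posrE ?(lt_le_trans ltr01) // (le_trans r_ge1).
Qed.

End elog.

Definition htop_s_eps {R : realType} {G : groupType} {X : Type}
    (d : X -> X -> R) (act : G -> X -> X) (Z : set X) (F : nat -> {fset G})
    (eps s : R) : \bar R :=
  limsup_ratio \oo (fun n => elog (sep_num d act Z (F n) eps))
    (fun n => (#|` F n|%:R)%R) s.

Section htop_mdim.
Context {R : realType} {G : groupType} {X : Type} {d : X -> X -> R}
  {act : G -> X -> X} {F : nat -> {fset G}} {Z : set X}.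
Hypotheses (FolnerF : Folner R F) (Z_neq0 : Z !=set0).

Local Notation sep := (sep_num d act Z).
Local Notation htop_s_eps := (htop_s_eps d act Z F).
Local Notation htop_e := (htop_eps d act Z F).
Local Notation mdimM := (mdimM d act Z F).

Lemma sep_num_ge1 K eps : 1 <= sep K eps.
Proof.
have [z Zz] := Z_neq0; apply: ereal_sup_ubound; exists 1%N => //.
by exists (fun=> z); split => // i j; rewrite !ltnS !leqn0 => /eqP-> /eqP->.
Qed.

Lemma sep_num_le K e1 e2 : (e1 <= e2)%R -> sep K e2 <= sep K e1.
Proof.
move=> e12; apply: ereal_sup_le => _ [n [f [Zf f_sep]] <-]; exists n => //.
by exists f; split => // i j *; apply: le_lt_trans e12 (f_sep i j _ _ _).
Qed.

Lemma elog_sep_ge0 eps n : 0 <= elog (sep (F n) eps).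
Proof. exact/elog_ge0/sep_num_ge1. Qed.

Lemma htop_epsE eps : htop_e eps = htop_s_eps eps 1.
Proof.
rewrite /htop_s_eps /limsup_ratio /htop_eps /limn_esup; congr limf_esup.
by apply/funext => n; rewrite powRr1 ?ler0n.
Qed.

Lemma htop_eps_ge0 eps : 0 <= htop_e eps.
Proof. by rewrite htop_epsE; apply: limsup_ratio_ge0; apply: elog_sep_ge0. Qed.

Lemma htop_eps_le e1 e2 : (e1 <= e2)%R -> htop_e e2 <= htop_e e1.
Proof.
move=> e12; apply: le_limf_esup; apply: nearW => n.
apply: lee_wpmul2r; first by rewrite lee_fin invr_ge0 ler0n.
by apply: le_elog; [apply: sep_num_ge1 | apply: sep_num_le].
Qed.

Lemma htop_eps_le_htop_s_eps eps s :
  (s <= 1)%R -> htop_e eps <= htop_s_eps eps s.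
Proof.
rewrite htop_epsE => s_le1.
apply: le_limsup_ratio => //; first exact: elog_sep_ge0.
by apply: nearW => n; rewrite ler1n cardfs_gt0; case: FolnerF.
Qed.

Lemma mdimM_le_mdimM_s s : (s <= 1)%R -> mdimM <= mdimM_s d act Z F s.
Proof.
move=> s_le1; apply: le_limsup_ratio => //; first exact: htop_eps_ge0.
by move/cvgryPge : (@ln_inv_cvgy R); apply.
Qed.

Lemma mdimM_s_eq0 s : (1 < s)%R -> mdimM < +oo -> mdimM_s d act Z F s = 0.
Proof.
by move=> s_gt1; apply: (limsup_ratio_eq0 htop_eps_ge0 _ _ s_gt1 ln_inv_cvgy).
Qed.

Lemma htop_eps_fin_near0 :
  mdimM < +oo -> \forall eps \near 0%R^'+, htop_e eps < +oo.
Proof.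
move=> /limf_esup_lt M_fin; near=> eps.
have : htop_e eps * (((ln eps^-1) `^ 1)^-1)%:E < +oo by near: eps; apply: M_fin.
have ln_gt0 : (0 < ln eps^-1)%R.
  by near: eps; move/cvgryPgt : (@ln_inv_cvgy R); apply.
rewrite powRr1 ?ltW //; case: (htop_e eps) => [r _| |//]; first exact: ltry.
by rewrite gt0_mulye ?lte_fin ?invr_gt0.
Unshelve. all: by end_near.
Qed.

Lemma htop_s_eqy s : (s <= 1)%R -> htop_e eps @[eps --> 0%R^'+] --> +oo ->
  htop_s d act Z s F = +oo.
Proof.
move=> s_le1 /cvgeyPge htop_cvgy; apply: cvg_lim => //; apply/cvgeyPge => A.
apply: filterS (htop_cvgy A) => eps /le_trans; apply.
exact: htop_eps_le_htop_s_eps.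
Qed.

Lemma htop_eps_cvgy_of_htop :
  htop d act Z F = +oo -> htop_e eps @[eps --> 0%R^'+] --> +oo.
Proof.
(* [lim] falls back to [point], which is not [+oo], when there is no limit *)
move=> htop_y; apply: cvg_toP (htop_y); apply: cvgNpoint.
by change (htop d act Z F != point); rewrite htop_y.
Qed.

Lemma htop_eps_cvgy_of_mdimM :
  0 < mdimM -> htop_e eps @[eps --> 0%R^'+] --> +oo.
Proof.
move=> M_gt0; apply: nonincreasing_at_right0_cvgy => [x y _|].
  exact: htop_eps_le.
apply/eqP/negPn; rewrite -ltey; apply/negP => sup_fin.
rewrite -(limsup_ratio0 (w := fun eps : R => ln eps^-1)) in sup_fin.
have M_eq0 : mdimM = 0 :=
  limsup_ratio_eq0 htop_eps_ge0 _ _ ltr01 ln_inv_cvgy sup_fin.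
by rewrite M_eq0 ltxx in M_gt0.
Qed.

Context {e : nat -> G}.
Hypothesis e_inj : injective e.

Lemma htop_s_eps_eq0 eps s :
  (1 < s)%R -> htop_e eps < +oo -> htop_s_eps eps s = 0.
Proof.
rewrite htop_epsE => s_gt1; apply: (limsup_ratio_eq0 _ _ _ s_gt1).
  exact: elog_sep_ge0.
exact: Folner_card_cvgy e_inj.
Qed.

Lemma htop_s_eq0 s : (1 < s)%R -> mdimM < +oo -> htop_s d act Z s F = 0.
Proof.
move=> s_gt1 M_fin; apply: cvg_lim => //; apply: cvg_near_cst.
by apply: filterS (htop_eps_fin_near0 M_fin) => eps; apply: htop_s_eps_eq0.
Qed.

End htop_mdim.

Theorem mainTheorem12 (R : realType) (G : groupType) (X : Type)
  (d : X -> X -> R) (act : G -> X -> X) (F : nat -> {fset G}) (Z : set X) :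
  countably_infinite G ->
  is_metric d -> metric_compact d -> is_continuous_action d act ->
  Folner R F -> Z !=set0 ->
  ((htop d act Z F = +oo /\ mdimM d act Z F < +oo) ->
     DM d act Z F <= 1 /\ 1 <= entropy_dim d act Z F) /\
  ((0 < mdimM d act Z F /\ mdimM d act Z F < +oo) ->
     DM d act Z F = 1 /\ entropy_dim d act Z F = 1).
Proof.
move=> [e /bij_inj e_inj] _ _ _ FolnerF Z_neq0.
have DM_le1 : mdimM d act Z F < +oo -> DM d act Z F <= 1.
  by move=> M_fin; apply: ereal_inf_pos_le1 => s s_gt1; apply: mdimM_s_eq0.
have entropy_dim_ge1 : htop_eps d act Z F eps @[eps --> 0%R^'+] --> +oo ->
    1 <= entropy_dim d act Z F.
  move=> htop_cvgy; apply: ereal_inf_pos_ge1 => s _ s_lt1.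
  by rewrite htop_s_eqy ?(ltW s_lt1).
split=> [[htop_y M_fin] | [M_gt0 M_fin]].
  by split; [apply: DM_le1 | apply/entropy_dim_ge1/htop_eps_cvgy_of_htop].
split; apply/le_anti/andP; split.
- exact: DM_le1.
- apply: ereal_inf_pos_ge1 => s _ s_lt1 Ms_eq0.
  suff : mdimM d act Z F <= 0 by rewrite leNgt M_gt0.
  by rewrite -Ms_eq0; apply: mdimM_le_mdimM_s => //; apply: ltW.
- apply: ereal_inf_pos_le1 => s s_gt1.
  exact: (htop_s_eq0 FolnerF Z_neq0 e_inj).
- exact/entropy_dim_ge1/htop_eps_cvgy_of_mdimM.
Qed.
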